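(* Let $(X,\mathbb T,\pi)$ be a dynamical system on a complete metric space $(X,\rho)$ and $x\in X$. Assume (1) there is $\tau\in\mathbb T$, $\tau>0$, with $\lim_{t\to+\infty}\rho(\pi(t+\tau,x),\pi(t,x))=0$; (2) $x$ is positively asymptotically Poisson stable. Then $x$ is asymptotically $\tau$-periodic.
   Context: $\mathbb T$ is $\mathbb R_+$ or $\mathbb Z_+$; a dynamical system is a continuous $\pi:\mathbb T\times X\to X$ with $\pi(0,x)=x$, $\pi(t+s,x)=\pi(t,\pi(s,x))$. $\omega_x$ is the set of limits of $\pi(t_k,x)$ with $t_k\to+\infty$. A point $p$ is positively Poisson stable if $p\in\omega_p$; $x$ is positively asymptotically Poisson stable if there is a positively Poisson stable $p$ with $\rho(\pi(t,x),\pi(t,p))\to0$ as $t\to+\infty$. A point $p$ is $\tau$-periodic if $\pi(\tau,p)=p$; $x$ is asymptotically $\tau$-periodic if there is a $\tau$-periodic $p$ with $\lim_{t\to\infty}\rho(\pi(t,x),\pi(t,p))=0$. *)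

From Stdlib Require Import Reals.
Open Scope R_scope.

(* Time set T inside R: if [disc] then T = Z_+ (nonnegative integers),
   otherwise T = R_+ (nonnegative reals). *)
Definition inT (disc : bool) (t : R) : Prop :=
  if disc then exists n : nat, t = INR n else 0 <= t.

Definition is_metric {X : Type} (rho : X -> X -> R) : Prop :=
  (forall x y, 0 <= rho x y) /\
  (forall x y, rho x y = 0 <-> x = y) /\
  (forall x y, rho x y = rho y x) /\
  (forall x y z, rho x z <= rho x y + rho y z).

Definition seq_cauchy {X : Type} (rho : X -> X -> R) (u : nat -> X) : Prop :=
  forall eps, 0 < eps -> exists N, forall n m, (N <= n)%nat -> (N <= m)%nat ->
    rho (u n) (u m) < eps.

Definition seq_conv {X : Type} (rho : X -> X -> R) (u : nat -> X) (l : X) : Prop :=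
  forall eps, 0 < eps -> exists N, forall n, (N <= n)%nat -> rho (u n) l < eps.

Definition complete_metric {X : Type} (rho : X -> X -> R) : Prop :=
  forall u : nat -> X, seq_cauchy rho u -> exists l, seq_conv rho u l.

Definition dynamical_system (disc : bool) {X : Type} (rho : X -> X -> R)
  (pi : R -> X -> X) : Prop :=
  (forall x, pi 0 x = x) /\
  (forall t s x, inT disc t -> inT disc s -> pi (t + s) x = pi t (pi s x)) /\
  (forall t x, inT disc t -> forall eps, 0 < eps -> exists delta, 0 < delta /\
     forall t' x', inT disc t' -> Rabs (t' - t) < delta -> rho x' x < delta ->
       rho (pi t' x') (pi t x) < eps).

Definition lim_T_zero (disc : bool) (f : R -> R) : Prop :=
  forall eps, 0 < eps -> exists L, forall t, inT disc t -> L <= t -> Rabs (f t) < eps.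

Definition omega_limit (disc : bool) {X : Type} (rho : X -> X -> R)
  (pi : R -> X -> X) (x : X) (p : X) : Prop :=
  exists tk : nat -> R,
    (forall k, inT disc (tk k)) /\
    (forall M, exists N, forall k, (N <= k)%nat -> M <= tk k) /\
    seq_conv rho (fun k => pi (tk k) x) p.

Definition pos_poisson_stable (disc : bool) {X : Type} (rho : X -> X -> R)
  (pi : R -> X -> X) (p : X) : Prop :=
  omega_limit disc rho pi p p.

Definition pos_asymp_poisson_stable (disc : bool) {X : Type} (rho : X -> X -> R)
  (pi : R -> X -> X) (x : X) : Prop :=
  exists p, pos_poisson_stable disc rho pi p /\
    lim_T_zero disc (fun t => rho (pi t x) (pi t p)).


Definition asymp_periodic (disc : bool) {X : Type} (rho : X -> X -> R)
  (pi : R -> X -> X) (tau : R) (x : X) : Prop :=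
  exists p, pi tau p = p /\ lim_T_zero disc (fun t => rho (pi t x) (pi t p)).

From Stdlib Require Import Reals Lra Lia.
Open Scope R_scope.

(* Along p the shift defect
   rho(pi(t + tau) p, pi t p) is squeezed by the defect along x and the
   distance between the two orbits, so it tends to 0.  Evaluating it along
   times t_k -> +oo with pi(t_k) p -> p and using continuity of pi tau at p
   gives rho(pi tau p, p) = 0. *)

Lemma inT_add disc t s : inT disc t -> inT disc s -> inT disc (t + s).
Proof.
  destruct disc; simpl.
  - intros [n ->] [m ->]. exists (n + m)%nat. now rewrite plus_INR.
  - lra.
Qed.

Section TimeLimits.

Variable disc : bool.

Lemma lim_T_zero_shift (f : R -> R) (s : R) :
  inT disc s -> 0 <= s -> lim_T_zero disc f -> lim_T_zero disc (fun t => f (t + s)).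
Proof.
  intros Hs Hs0 Hf eps Heps.
  destruct (Hf eps Heps) as [L HL].
  exists L; intros t Ht HLt.
  apply HL; [now apply inT_add | lra].
Qed.

Lemma lim_T_zero_plus (f g : R -> R) :
  lim_T_zero disc f -> lim_T_zero disc g -> lim_T_zero disc (fun t => f t + g t).
Proof.
  intros Hf Hg eps Heps.
  destruct (Hf (eps / 2) ltac:(lra)) as [L1 HL1].
  destruct (Hg (eps / 2) ltac:(lra)) as [L2 HL2].
  exists (Rmax L1 L2); intros t Ht HLt.
  pose proof (Rmax_l L1 L2); pose proof (Rmax_r L1 L2).
  pose proof (HL1 t Ht ltac:(lra)); pose proof (HL2 t Ht ltac:(lra)).
  pose proof (Rabs_triang (f t) (g t)); lra.
Qed.

Lemma lim_T_zero_le (f g : R -> R) :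
  (forall t, inT disc t -> Rabs (g t) <= f t) ->
  lim_T_zero disc f -> lim_T_zero disc g.
Proof.
  intros Hgf Hf eps Heps.
  destruct (Hf eps Heps) as [L HL].
  exists L; intros t Ht HLt.
  pose proof (HL t Ht HLt); pose proof (Hgf t Ht).
  pose proof (Rle_abs (f t)); lra.
Qed.

End TimeLimits.

Section Metric.

Variables (X : Type) (rho : X -> X -> R).
Hypothesis Hrho : is_metric rho.

Lemma metric_ge0 a b : 0 <= rho a b.
Proof. apply Hrho. Qed.

Lemma metric_sym a b : rho a b = rho b a.
Proof. apply Hrho. Qed.

Lemma metric_triangle a b c : rho a c <= rho a b + rho b c.
Proof. apply Hrho. Qed.

Lemma metric_eq_of_small a b : (forall eps, 0 < eps -> rho a b < eps) -> a = b.
Proof.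
  intros Hsmall; apply Hrho.
  destruct (Rle_lt_dec (rho a b) 0) as [Hle | Hgt].
  - pose proof (metric_ge0 a b); lra.
  - specialize (Hsmall _ Hgt); lra.
Qed.

End Metric.

Section Dynamics.

Variables (disc : bool) (X : Type) (rho : X -> X -> R) (pi : R -> X -> X).
Hypotheses (Hrho : is_metric rho) (Hpi : dynamical_system disc rho pi).

Lemma ds_continuous_at_time t q eps :
  inT disc t -> 0 < eps ->
  exists delta, 0 < delta /\ forall y, rho y q < delta -> rho (pi t y) (pi t q) < eps.
Proof.
  intros Ht Heps.
  destruct Hpi as (_ & _ & Hcont).
  destruct (Hcont t q Ht eps Heps) as (delta & Hdelta & Hd).
  exists delta; split; [exact Hdelta|].
  intros y Hy; apply Hd; [exact Ht | rewrite Rminus_diag, Rabs_R0; lra | exact Hy].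
Qed.

Lemma shift_defect_transfer (x p : X) (tau : R) :
  inT disc tau -> 0 <= tau ->
  lim_T_zero disc (fun t => rho (pi t x) (pi t p)) ->
  lim_T_zero disc (fun t => rho (pi (t + tau) x) (pi t x)) ->
  lim_T_zero disc (fun t => rho (pi (t + tau) p) (pi t p)).
Proof.
  intros Htau Htau0 Hxp Hx.
  pose proof (lim_T_zero_shift _ _ _ Htau Htau0 Hxp) as Hxp_shift.
  apply (lim_T_zero_le disc
    (fun t => rho (pi (t + tau) x) (pi (t + tau) p) +
              (rho (pi (t + tau) x) (pi t x) + rho (pi t x) (pi t p))));
    [| now repeat apply lim_T_zero_plus].
  intros t _.
  rewrite Rabs_pos_eq by apply metric_ge0, Hrho.
  pose proof (metric_triangle _ _ Hrho (pi (t + tau) p) (pi (t + tau) x) (pi t p)).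
  pose proof (metric_triangle _ _ Hrho (pi (t + tau) x) (pi t x) (pi t p)).
  pose proof (metric_sym _ _ Hrho (pi (t + tau) p) (pi (t + tau) x)); lra.
Qed.

Lemma omega_limit_shift_fixed (p q : X) (tau : R) :
  inT disc tau ->
  lim_T_zero disc (fun t => rho (pi (t + tau) p) (pi t p)) ->
  omega_limit disc rho pi p q -> pi tau q = q.
Proof.
  intros Htau Hdefect (tk & Htk & Htk_inf & Hconv).
  destruct Hpi as (_ & Hsg & _).
  apply (metric_eq_of_small _ _ Hrho); intros eps Heps.
  destruct (ds_continuous_at_time tau q (eps / 3) Htau ltac:(lra))
    as (delta & Hdelta & Hcont).
  destruct (Hdefect (eps / 3) ltac:(lra)) as [L HL].
  destruct (Htk_inf L) as [N1 HN1].
  destruct (Hconv (Rmin delta (eps / 3)) ltac:(apply Rmin_pos; lra)) as [N2 HN2].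
  set (k := Nat.max N1 N2).
  set (y := pi (tk k) p).
  assert (Hyq : rho y q < Rmin delta (eps / 3)) by (apply HN2; unfold k; lia).
  pose proof (Rmin_l delta (eps / 3)); pose proof (Rmin_r delta (eps / 3)).
  assert (Hmove : rho (pi tau y) (pi tau q) < eps / 3) by (apply Hcont; lra).
  assert (Hstep : rho (pi tau y) y < eps / 3).
  { pose proof (HL (tk k) (Htk k) (HN1 k ltac:(unfold k; lia))) as Hk.
    rewrite Rabs_pos_eq, Rplus_comm, Hsg in Hk; [exact Hk | exact Htau | apply Htk |].
    apply metric_ge0, Hrho. }
  pose proof (metric_triangle _ _ Hrho (pi tau q) (pi tau y) q).
  pose proof (metric_triangle _ _ Hrho (pi tau y) y q).
  pose proof (metric_sym _ _ Hrho (pi tau q) (pi tau y)); lra.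
Qed.

End Dynamics.

Theorem mainTheorem4 (disc : bool) (X : Type) (rho : X -> X -> R)
  (pi : R -> X -> X) (x : X) (tau : R) :
  is_metric rho -> complete_metric rho -> dynamical_system disc rho pi ->
  inT disc tau -> 0 < tau ->
  lim_T_zero disc (fun t => rho (pi (t + tau) x) (pi t x)) ->
  pos_asymp_poisson_stable disc rho pi x ->
  asymp_periodic disc rho pi tau x.
Proof.
  intros Hrho _ Hpi Htau Htau0 Hx (p & Hp_stable & Hxp).
  exists p; split; [| exact Hxp].
  apply (omega_limit_shift_fixed disc X rho pi Hrho Hpi p p tau Htau);
    [| exact Hp_stable].
  exact (shift_defect_transfer disc X rho pi Hrho x p tau Htau
           ltac:(lra) Hxp Hx).
Qed.
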